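(* Every nondeterministic constraint logic (NCL) instance that has at least one solution has more than one solution.
   Context: An NCL instance is a 3-regular undirected graph whose edges are colored blue or red, with each vertex incident to either exactly one or exactly three blue edges. A solution is an orientation of its edges such that every vertex has at least one incoming blue edge or at least two incoming red edges. *)

From mathcomp Require Import all_boot.
Set Implicit Arguments. Unset Strict Implicit. Unset Printing Implicit Defensive.

Definition simple_graph (V : finType) (adj : rel V) : Prop :=
  irreflexive adj /\ symmetric adj.

Definition cubic (V : finType) (adj : rel V) : Prop :=
  forall v : V, #|[set w | adj v w]| = 3.

Definition NCL_instance (V : finType) (adj : rel V) (blue : rel V) : Prop :=
  [/\ simple_graph adj, cubic adj,
      (forall u v, adj u v -> blue u v = blue v u) &
      forall v : V, #|[set w | adj v w && blue v w]| \in [:: 1; 3]].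

(* An orientation of the edges: [o u v] means the edge {u,v} is directed
   from u to v.  Only edges may be oriented, and every edge gets exactly one
   direction. *)
Definition orientation (V : finType) (adj : rel V) (o : rel V) : Prop :=
  (forall u v, o u v -> adj u v) /\
  (forall u v, adj u v -> o u v != o v u).

Definition NCL_solution (V : finType) (adj blue : rel V) (o : rel V) : Prop :=
  orientation adj o /\
  forall v : V,
    (exists u, [&& adj u v, blue u v & o u v]) \/
    2 <= #|[set u | [&& adj u v, ~~ blue u v & o u v]]|.

From mathcomp Require Import all_boot zify.
Set Implicit Arguments. Unset Strict Implicit. Unset Printing Implicit Defensive.

(* Weigh blue edges 2 and red edges 1. An orientation is a solution iff every
   vertex receives weight at least 2, while the total weight at a vertex is
   3 + (number of blue edges) >= 4. Given a solution, if some vertex receives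
   weight at least 3, then one of its incoming edges can be reversed without
   dropping it below 2, and reversing an edge only helps its tail. Otherwise
   every vertex receives at most 2, hence sends at least 2, and reversing all
   edges gives a second solution. *)

Lemma card_setID (T : finType) (P b : pred T) :
  #|[set u | P u]| = #|[set u | P u && b u]| + #|[set u | P u && ~~ b u]|.
Proof.
by rewrite -(cardsID [set u | b u]); congr (_ + _); apply: eq_card => u;
  rewrite !inE andbC.
Qed.

Lemma sum_succ_bool (T : finType) (P b : pred T) :
  \sum_(u | P u) (b u).+1 =
  2 * #|[set u | P u && b u]| + #|[set u | P u && ~~ b u]|.
Proof.
rewrite (bigID b) /= (eq_bigr (fun=> 2)) => [|u /andP[_ ->]//].
rewrite [X in _ + X](eq_bigr (fun=> 1)) => [|u /andP[_ /negbTE ->]//].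
by rewrite !sum_nat_const !cardsE mulnC muln1.
Qed.

Lemma sum_succ_bool_removable (T : finType) (P b : pred T) :
  2 < \sum_(u | P u) (b u).+1 ->
  exists2 u, P u & (b u).+1 + 2 <= \sum_(u | P u) (b u).+1.
Proof.
move=> Hs; have Hsum := sum_succ_bool P b.
case: (posnP #|[set u | P u && ~~ b u]|) => [R0 | /card_gt0P[u]].
  have /card_gt0P[u] : 0 < #|[set u | P u && b u]| by lia.
  by rewrite inE => /andP[Pu Bu]; exists u; rewrite // Bu; lia.
by rewrite inE => /andP[Pu /negbTE Bu]; exists u; rewrite // Bu; lia.
Qed.

Section Orientations.

Variables (V : finType) (adj blue : rel V).
Hypothesis adj_sym : symmetric adj.

Definition inflow (o : rel V) (v : V) : nat :=
  \sum_(u | adj u v && o u v) (blue u v).+1.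

Lemma inflowE o v :
  inflow o v = 2 * #|[set u | [&& adj u v, blue u v & o u v]]|
               + #|[set u | [&& adj u v, ~~ blue u v & o u v]]|.
Proof.
rewrite /inflow sum_succ_bool; congr (2 * _ + _); apply: eq_card => u;
  by rewrite !inE; case: (adj u v) (blue u v) (o u v) => [] [] [].
Qed.

Lemma NCL_solutionE o :
  orientation adj o -> NCL_solution adj blue o <-> forall v, 2 <= inflow o v.
Proof.
move=> Ho; split=> [[_ Hsat] v | Hin]; last split=> // v.
  rewrite inflowE; case: (Hsat v) => [[u Hu] | ]; last lia.
  have : 0 < #|[set u | [&& adj u v, blue u v & o u v]]|.
    by apply/card_gt0P; exists u; rewrite inE.
  lia.
move: (Hin v); rewrite inflowE.
case: (posnP #|[set u | [&& adj u v, blue u v & o u v]]|) => [-> | /card_gt0P[u]].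
  by right; lia.
by rewrite inE => Hu _; left; exists u.
Qed.

Lemma inflow_mono (o o' : rel V) v :
  (forall u, o u v -> o' u v) -> inflow o v <= inflow o' v.
Proof.
move=> Hoo'; rewrite /inflow !(big_mkcond (fun u => adj u v && _)).
apply: leq_sum => u _; case: (adj u v) => //=.
by case Hu: (o u v); [rewrite Hoo' | case: ifP].
Qed.

Definition flip_edge (o : rel V) (a b : V) : rel V := fun x y =>
  if ((x == a) && (y == b)) || ((x == b) && (y == a)) then o y x else o x y.

Definition reverse (o : rel V) : rel V := fun x y => o y x.

Lemma orientation_flip_edge o a b :
  orientation adj o -> orientation adj (flip_edge o a b).
Proof.
move=> [Hadj Hanti]; split=> x y; rewrite /flip_edge.
  by case: ifP => _ /Hadj //; rewrite adj_sym.
rewrite orbC !(andbC (y == _)).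
by case: ifP => _ /Hanti //; rewrite eq_sym.
Qed.

Lemma orientation_reverse o : orientation adj o -> orientation adj (reverse o).
Proof.
move=> [Hadj Hanti]; split=> x y; rewrite /reverse.
  by move=> /Hadj; rewrite adj_sym.
by move=> /Hanti; rewrite eq_sym.
Qed.

Lemma inflow_flip_edge_head o a b :
  orientation adj o -> o a b ->
  inflow (flip_edge o a b) b + (blue a b).+1 = inflow o b.
Proof.
move=> [Hadj Hanti] Hab.
have Hba : o b a = false by move: (Hanti _ _ (Hadj _ _ Hab)); rewrite Hab; case: (o b a).
have Hne : b != a by apply: contraFneq Hba => Eba; rewrite Eba in Hab *.
rewrite /inflow !(big_mkcond (fun u => adj u b && _)) (bigD1 a) // [RHS](bigD1 a) //=.
rewrite /flip_edge !eqxx /= Hba Hadj // Hab andbF add0n addnC; congr (_ + _).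
by apply: eq_bigr => u Hu; rewrite (negbTE Hu) (negbTE Hne) andbF.
Qed.

Lemma flip_edge_solution o a b :
  NCL_solution adj blue o -> o a b -> (blue a b).+1 + 2 <= inflow o b ->
  NCL_solution adj blue (flip_edge o a b).
Proof.
move=> Hsol Hab Hb; have Ho := Hsol.1; have Hin := (NCL_solutionE Ho).1 Hsol.
apply/(NCL_solutionE (orientation_flip_edge a b Ho)) => x.
have [-> | Hxb] := eqVneq x b.
  by move: Hb; rewrite -(inflow_flip_edge_head Ho Hab); lia.
apply: leq_trans (Hin x) (inflow_mono _) => y; rewrite /flip_edge.
by case: ifP => // /orP[/andP[_ /eqP Exb] | /andP[/eqP -> /eqP ->]] //; rewrite Exb eqxx in Hxb.
Qed.

Lemma inflow_add_reverse o v : orientation adj o ->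
  inflow o v + inflow (reverse o) v = \sum_(u | adj u v) (blue u v).+1.
Proof.
move=> Ho; rewrite [RHS](bigID (fun u => o u v)) /=; congr (_ + _).
apply: eq_bigl => u; rewrite /reverse; case Huv: (adj u v) => //=.
by move: (Ho.2 _ _ Huv); case: (o u v); case: (o v u).
Qed.

Lemma incident_weight_ge4 v :
  NCL_instance adj blue -> 4 <= \sum_(u | adj u v) (blue u v).+1.
Proof.
case=> _ Hcub Hblue_sym Hblue_deg; rewrite sum_succ_bool.
have Hdeg : #|[set u | adj u v]| = 3.
  by rewrite -(Hcub v); apply: eq_card => u; rewrite !inE adj_sym.
have : #|[set u | adj u v && blue u v]| \in [:: 1; 3].
  rewrite (@eq_card _ _ [set w | adj v w && blue v w]) // => u.
  by rewrite !inE adj_sym; case Hvu: (adj v u) => //=; apply: Hblue_sym; rewrite adj_sym.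
move: Hdeg; rewrite (card_setID _ (blue ^~ v)) !inE => Hdeg.
case/orP=> /eqP Hb; lia.
Qed.

Lemma reverse_solution o :
  NCL_instance adj blue -> orientation adj o -> (forall v, inflow o v <= 2) ->
  NCL_solution adj blue (reverse o).
Proof.
move=> Hinst Ho Hle; apply/(NCL_solutionE (orientation_reverse Ho)) => v.
by move: (inflow_add_reverse v Ho) (incident_weight_ge4 v Hinst) (Hle v); lia.
Qed.

End Orientations.

Theorem mainTheorem18 (V : finType) (adj blue : rel V) :
  0 < #|V| ->
  NCL_instance adj blue ->
  (exists o, NCL_solution adj blue o) ->
  exists o1 o2, [/\ NCL_solution adj blue o1, NCL_solution adj blue o2 &
                    exists u v, o1 u v != o2 u v].
Proof.
move=> /card_gt0P[v0 _] Hinst [o Hsol].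
have [[_ Hsym] Hcub _ _] := Hinst; have Ho := Hsol.1.
case: (boolP [exists v, 2 < inflow adj blue o v]) => [/existsP[v] | /existsPn Hle].
  move=> /sum_succ_bool_removable[u /andP[Huv Hou] Hw].
  exists o, (flip_edge o u v); split=> //; first exact: flip_edge_solution.
  by exists u, v; rewrite /flip_edge !eqxx /=; apply: Ho.2.
have /card_gt0P[w] : 0 < #|[set w | adj v0 w]| by rewrite Hcub.
rewrite inE => Hv0w.
exists o, (reverse o); split=> //.
  by apply: reverse_solution => // v; rewrite leqNgt Hle.
by exists v0, w; apply: Ho.2.
Qed.
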